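(* Let $1\le k<n$, let $w=(y_1,\dots,y_{k-r},\overline{z_r},\dots,\overline{z_1},v_1,\dots,v_{n-k})\in W^{OG(k,2n+1)}$ and $\lambda=\mathrm{Inv}(w)$. Then for $1\le i\le k$, \[\lambda^{(1)}_i=\begin{cases} n+1-k+|\{l: z_i<v_l\}| & \text{if } i\le r,\\ |\{l: y_{k+1-i}>v_l\}| & \text{if } i>r,\end{cases}\qquad \lambda^{(2)}_i=\begin{cases} |\{q: z_i<z_q\}|+|\{t: z_i<y_t\}| & \text{if } i\le r,\\ 0 & \text{if } i>r.\end{cases}\]
   Context: Root system $B_n$: positive roots $e_a\pm e_b$ ($a<b$), $e_a$. $W^{OG(k,2n+1)}$ is the set of signed permutations $w=(y_1,\dots,y_{k-r},\overline{z_r},\dots,\overline{z_1},v_1,\dots,v_{n-k})$ of $1,\dots,n$ (bars = negative entries) with $0\le r\le k$, $y_1<\dots<y_{k-r}$, $z_r>\dots>z_1$, $v_1<\dots<v_{n-k}$; so the entry in position $k+1-i$ is $\overline{z_i}$ if $i\le r$ and $y_{k+1-i}$ if $i>r$. $w$ acts by $e_a\mapsto\pm e_{|w(a)|}$ (minus if barred), and $\mathrm{Inv}(w)$ is the set of positive roots sent to negative roots. For a set $S$ of positive roots, $\lambda^{(1)}_i$ is the number of roots of $S$ among $e_{k+1-i}\pm e_b$ ($b>k$) and $e_{k+1-i}$, and $\lambda^{(2)}_i$ is the number of roots of $S$ of the form $e_a+e_{k+1-i}$ with $a<k+1-i$. *)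

From mathcomp Require Import all_boot all_order all_algebra.
Unset Printing Implicit Defensive.
Import Order.TTheory GRing.Theory Num.Theory.
Local Open Scope ring_scope.

(* Conventions: positions/indices are 1-based natural numbers 1..n.
   Vectors of R^n (coordinates in Z suffice for roots) are {ffun 'I_n -> int},
   coordinate j : 'I_n standing for position j+1. *)

Definition ebas (n a : nat) : {ffun 'I_n -> int} :=
  [ffun j : 'I_n => ((j.+1 == a)%N)%:Z].

Definition posroots (n : nat) : seq {ffun 'I_n -> int} :=
  [seq ebas n a - ebas n b | a <- iota 1 n, b <- iota a.+1 (n - a)] ++
  [seq ebas n a + ebas n b | a <- iota 1 n, b <- iota a.+1 (n - a)] ++
  [seq ebas n a | a <- iota 1 n].

Definition negroots (n : nat) : seq {ffun 'I_n -> int} :=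
  [seq - x | x <- posroots n].

(* A signed permutation in one-line notation: w : nat -> int, w a = entry in
   position a (negative = barred). It acts linearly by e_a |-> +- e_{|w a|}. *)
Definition sgnint (x : int) : int := if x < 0 then -1 else 1.

Definition act (n : nat) (w : nat -> int) (x : {ffun 'I_n -> int})
  : {ffun 'I_n -> int} :=
  [ffun j : 'I_n => \sum_(a < n)
      x a * (if (absz (w a.+1) == j.+1)%N then sgnint (w a.+1) else 0)].

Definition Inv (n : nat) (w : nat -> int) : pred {ffun 'I_n -> int} :=
  fun x => (x \in posroots n) && (act n w x \in negroots n).

Definition lam1 (n k : nat) (S : pred {ffun 'I_n -> int}) (i : nat) : nat :=
  let p := (k.+1 - i)%N in
  count S ([seq ebas n p - ebas n b | b <- iota k.+1 (n - k)] ++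
           [seq ebas n p + ebas n b | b <- iota k.+1 (n - k)] ++
           [:: ebas n p]).

Definition lam2 (n k : nat) (S : pred {ffun 'I_n -> int}) (i : nat) : nat :=
  let p := (k.+1 - i)%N in
  count S [seq ebas n a + ebas n p | a <- iota 1 p.-1].

Definition oneline (k r : nat) (y z v : nat -> nat) : nat -> int :=
  fun a => if (a <= k - r)%N then (y a)%:Z
           else if (a <= k)%N then - (z (k.+1 - a)%N)%:Z
           else (v (a - k)%N)%:Z.

(* Every positive root of B_n is e_a + t e_b (a < b, t = +-1) or e_a, and among
   such vectors the positive roots are those whose first nonzero coordinate is 1.
   The signed permutation w sends e_a + t e_b to
   sgn(w a) e_|w a| + t sgn(w b) e_|w b|, so e_a + t e_b is an inversion iff the
   coefficient at the smaller of |w a|, |w b| is -1, and e_a is one iff w a < 0.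
   For p = k+1-i, reading these signs off the one-line word turns the roots
   e_p +- e_b (b > k), e_p and e_a + e_p (a < p) counted by lambda^(1)_i and
   lambda^(2)_i into comparisons between entries.  When i <= r, the roots e_a + e_p
   with a barred are all inversions; there are r - i of them, which is
   |{q : z_i < z_q}| because z is increasing. *)

From mathcomp Require Import all_boot all_order all_algebra.
From mathcomp Require Import zify.
Import Order.TTheory GRing.Theory Num.Theory.

Section RootVectors.
Local Open Scope ring_scope.
Variable n : nat.
Implicit Types (s t c : int) (x : {ffun 'I_n -> int}) (w : nat -> int).

Definition sebas s (a : nat) : {ffun 'I_n -> int} :=
  [ffun j : 'I_n => s * ((j.+1 == a)%N)%:Z].

Definition is_sign s := (s == 1) || (s == -1).

Lemma ebas_sebas a : ebas n a = sebas 1 a.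
Proof. by apply/ffunP => j; rewrite !ffunE mul1r. Qed.

Lemma oppr_sebas s a : - sebas s a = sebas (- s) a.
Proof. by apply/ffunP => j; rewrite !ffunE mulNr. Qed.

Lemma actD w x1 x2 : act n w (x1 + x2) = act n w x1 + act n w x2.
Proof.
apply/ffunP => j; rewrite !ffunE -big_split; apply: eq_bigr => a _.
by rewrite ffunE mulrDl.
Qed.

Lemma act_sebas w s a : (0 < a <= n)%N ->
  act n w (sebas s a) = sebas (s * sgnint (w a)) (absz (w a)).
Proof.
move=> /andP [a0 an]; have ha' : (a.-1 < n)%N by lia.
apply/ffunP => j; rewrite !ffunE (bigD1 (Ordinal ha')) //= big1 ?addr0.
  rewrite ffunE /= prednK // eqxx mulr1 eq_sym.
  by case: eqP => _; rewrite ?mulr1 ?mulr0.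
move=> b /eqP hb; rewrite ffunE (_ : (b.+1 == a) = false) ?mulr0 ?mul0r //.
by apply/eqP => e; apply: hb; apply: val_inj => /=; lia.
Qed.

Definition leads_with x c (j : 'I_n) :=
  x j = c /\ forall j' : 'I_n, (j' < j)%N -> x j' = 0.

Lemma leads_with_unique x c c' j j' :
  leads_with x c j -> leads_with x c' j' -> c != 0 -> c' != 0 -> c = c'.
Proof.
move=> [xj xlt] [xj' xlt'] /eqP c0 /eqP c'0.
case: (ltngtP j j') => [/xlt'|/xlt|/val_inj ejj'].
- by rewrite xj.
- by rewrite xj'.
- by rewrite -xj -xj' ejj'.
Qed.

Arguments leads_with_unique {x c c' j j'}.

Lemma sebas_leads s a : (0 < a <= n)%N -> exists j, leads_with (sebas s a) s j.
Proof.
move=> ha; have ha' : (a.-1 < n)%N by lia.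
exists (Ordinal ha'); split=> [|j' /= hj']; rewrite ffunE /=.
  by rewrite prednK ?eqxx ?mulr1 //; lia.
by rewrite (_ : (j'.+1 == a) = false) ?mulr0 //; apply/eqP; lia.
Qed.

Lemma sebasD_leads s t a b : (0 < a)%N -> (a < b <= n)%N ->
  exists j, leads_with (sebas s a + sebas t b) s j.
Proof.
move=> ha hab; have ha' : (a.-1 < n)%N by lia.
exists (Ordinal ha'); split=> [|j' /= hj']; rewrite !ffunE /=.
  rewrite prednK // eqxx.
  have -> : (a == b) = false by apply/eqP; lia.
  by rewrite mulr1 mulr0 addr0.
have -> : (j'.+1 == a) = false by apply/eqP; lia.
have -> : (j'.+1 == b) = false by apply/eqP; lia.
by rewrite !mulr0 addr0.
Qed.

Lemma posroots_leads x : x \in posroots n -> exists j, leads_with x 1 j.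
Proof.
rewrite /posroots !mem_cat => /or3P [] /=.
- case/allpairsPdep => a [b [ha hb ->]]; move: ha hb; rewrite !mem_iota => ha hb.
  by rewrite !ebas_sebas oppr_sebas; apply: sebasD_leads; lia.
- case/allpairsPdep => a [b [ha hb ->]]; move: ha hb; rewrite !mem_iota => ha hb.
  by rewrite !ebas_sebas; apply: sebasD_leads; lia.
- case/mapP => a; rewrite mem_iota => ha ->.
  by rewrite ebas_sebas; apply: sebas_leads; lia.
Qed.

Lemma posroots_sebasD s t a b : (0 < a)%N -> (a < b <= n)%N ->
  is_sign s -> is_sign t -> (sebas s a + sebas t b \in posroots n) = (s == 1).
Proof.
move=> ha hab /orP [] /eqP -> ht.
  rewrite eqxx /posroots !mem_cat; apply/or3P.
  have [] := orP ht => /eqP -> ; [apply: Or32 | apply: Or31];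
    rewrite -?oppr_sebas -!ebas_sebas;
    apply: (allpairs_f_dep (fun a b => _)); rewrite mem_iota; lia.
apply/negbTE/negP => /posroots_leads [j lj].
have [j' lj'] := sebasD_leads (-1) t a b ha hab.
by have /eqP := leads_with_unique lj lj' isT isT.
Qed.

Lemma posroots_sebas s a : (0 < a <= n)%N -> is_sign s ->
  (sebas s a \in posroots n) = (s == 1).
Proof.
move=> ha /orP [] /eqP ->.
  rewrite eqxx -ebas_sebas /posroots !mem_cat; apply/or3P/Or33.
  by apply: map_f; rewrite mem_iota; lia.
apply/negbTE/negP => /posroots_leads [j lj].
have [j' lj'] := sebas_leads (-1) a ha.
by have /eqP := leads_with_unique lj lj' isT isT.
Qed.

Lemma negrootsE x : (x \in negroots n) = (- x \in posroots n).
Proof. by rewrite -{1}(opprK x) /negroots mem_map //; exact: oppr_inj. Qed.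

Lemma sgnint_eqN1 (m : int) : (sgnint m == -1) = (m < 0).
Proof. by rewrite /sgnint; case: ltrP. Qed.

Lemma sgnint_eq1 (m : int) : (sgnint m == 1) = (0 <= m).
Proof. by rewrite /sgnint; case: ltrP. Qed.

Lemma is_sign_sgnint (m : int) : is_sign (sgnint m).
Proof. by rewrite /is_sign /sgnint; case: ifP. Qed.

Lemma is_signN s : is_sign s -> is_sign (- s).
Proof. by case/orP => /eqP ->. Qed.

Lemma is_signM s t : is_sign s -> is_sign t -> is_sign (s * t).
Proof. by case/orP => /eqP -> /orP [] /eqP ->. Qed.

Lemma Inv_pair w t a b : (0 < a)%N -> (a < b <= n)%N -> is_sign t ->
  (0 < absz (w a) <= n)%N -> (0 < absz (w b) <= n)%N -> absz (w a) != absz (w b) ->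
  Inv n w (ebas n a + sebas t b) =
  ((if (absz (w a) < absz (w b))%N then sgnint (w a) else t * sgnint (w b)) == -1).
Proof.
move=> ha hab ht hwa hwb hne.
rewrite /Inv ebas_sebas posroots_sebasD //= negrootsE actD !act_sebas; try lia.
rewrite opprD !oppr_sebas mul1r.
have sa := is_signN _ (is_sign_sgnint (w a)).
have stb := is_signN _ (is_signM _ _ ht (is_sign_sgnint (w b))).
case: ltngtP => [lt|gt|eq]; last by rewrite eq eqxx in hne.
- by rewrite posroots_sebasD ?eqr_oppLR //; lia.
- by rewrite addrC posroots_sebasD ?eqr_oppLR //; lia.
Qed.

Lemma Inv_ebas w a : (0 < a <= n)%N -> (0 < absz (w a) <= n)%N ->
  Inv n w (ebas n a) = (w a < 0).
Proof.
move=> ha hwa; rewrite /Inv ebas_sebas posroots_sebas //= negrootsE act_sebas //.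
rewrite mul1r oppr_sebas posroots_sebas ?eqr_oppLR ?sgnint_eqN1 //.
exact/is_signN/is_sign_sgnint.
Qed.

End RootVectors.

Section SignedPermutation.
Local Open Scope ring_scope.
Variables (n : nat) (w : nat -> int).
Hypothesis w_perm : perm_eq [seq absz (w a) | a <- iota 1 n] (iota 1 n).

Lemma sperm_range a : (0 < a <= n)%N -> (0 < absz (w a) <= n)%N.
Proof.
move=> ha; have : absz (w a) \in iota 1 n.
  by rewrite -(perm_mem w_perm); apply: map_f; rewrite mem_iota; lia.
by rewrite mem_iota; lia.
Qed.

Lemma sperm_eq a b : (0 < a <= n)%N -> (0 < b <= n)%N ->
  (absz (w a) == absz (w b)) = (a == b).
Proof.
move=> ha hb; apply/eqP/eqP => [e|-> //].
have /mkseq_uniqP inj : uniq (mkseq (fun i => absz (w i.+1)) n).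
  have -> : mkseq (fun i => absz (w i.+1)) n = [seq absz (w a) | a <- iota 1 n].
    by rewrite /mkseq -[iota 1 n]/(iota (1 + 0) n) iotaDl -map_comp.
  by rewrite (perm_uniq w_perm) iota_uniq.
by have := inj a.-1 b.-1; rewrite !inE !prednK; lia.
Qed.

Lemma Inv_sperm_sebas t a b : (0 < a)%N -> (a < b <= n)%N -> is_sign t ->
  Inv n w (ebas n a + sebas n t b) =
  ((if (absz (w a) < absz (w b))%N then sgnint (w a) else t * sgnint (w b)) == -1).
Proof.
move=> ha hab ht; apply: Inv_pair; rewrite ?sperm_eq ?sperm_range //; lia.
Qed.

Lemma Inv_addE a b : (0 < a)%N -> (a < b <= n)%N ->
  Inv n w (ebas n a + ebas n b) =
  (if (absz (w a) < absz (w b))%N then w a < 0 else w b < 0).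
Proof.
move=> ha hab; rewrite (ebas_sebas n b) Inv_sperm_sebas // mul1r.
by rewrite (fun_if (fun s => s == -1)) !sgnint_eqN1.
Qed.

Lemma Inv_subE a b : (0 < a)%N -> (a < b <= n)%N ->
  Inv n w (ebas n a - ebas n b) =
  (if (absz (w a) < absz (w b))%N then w a < 0 else 0 <= w b).
Proof.
move=> ha hab; rewrite (ebas_sebas n b) oppr_sebas Inv_sperm_sebas // mulN1r.
by rewrite (fun_if (fun s => s == -1)) sgnint_eqN1 eqr_oppLR opprK sgnint_eq1.
Qed.

Lemma Inv_sperm_ebas a : (0 < a <= n)%N -> Inv n w (ebas n a) = (w a < 0).
Proof. by move=> ha; rewrite Inv_ebas ?sperm_range. Qed.

End SignedPermutation.

Lemma lam1E n k S i :
  lam1 n k S i =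
  (count (fun l => S (ebas n (k.+1 - i) - ebas n (k + l))%R) (iota 1 (n - k))
   + count (fun l => S (ebas n (k.+1 - i) + ebas n (k + l))%R) (iota 1 (n - k))
   + S (ebas n (k.+1 - i)))%N.
Proof.
rewrite /lam1.
have -> : iota k.+1 (n - k) = map (addn k) (iota 1 (n - k)) by rewrite -iotaDl addn1.
by rewrite !count_cat !count_map /= addn0 addnA.
Qed.

Lemma lam2E n k S i :
  lam2 n k S i = count (fun a => S (ebas n a + ebas n (k.+1 - i))%R) (iota 1 (k - i)).
Proof. by rewrite /lam2 count_map; congr (count _ (iota 1 _)); lia. Qed.

Lemma count_incr_gt (f : nat -> nat) m i :
  (forall a b, (1 <= a)%N -> (a < b)%N -> (b <= m)%N -> (f a < f b)%N) ->
  (1 <= i <= m)%N -> count (fun q => f i < f q)%N (iota 1 m) = (m - i)%N.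
Proof.
move=> f_incr hi.
have -> : iota 1 m = iota 1 i ++ iota i.+1 (m - i) by rewrite -iotaD; congr iota; lia.
rewrite count_cat (@eq_in_count _ _ pred0) ?count_pred0; last first.
  move=> q; rewrite mem_iota => hq /=.
  by have := f_incr q i; case: (ltngtP q i) => [||->]; lia.
rewrite (@eq_in_count _ _ predT) ?count_predT ?size_iota // => q.
by rewrite mem_iota => hq; apply: f_incr; lia.
Qed.

Section OneLineWord.
Local Open Scope ring_scope.
Variables (k r : nat) (y z v : nat -> nat).
Local Notation w := (oneline k r y z v).

Lemma oneline_head a : (a <= k - r)%N -> w a = (y a)%:Z.
Proof. by move=> ha; rewrite /oneline ha. Qed.

Lemma oneline_barred a : (k - r < a <= k)%N -> w a = - (z (k.+1 - a))%:Z.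
Proof. by case/andP => h1 h2; rewrite /oneline leqNgt h1 h2. Qed.

Lemma oneline_tail l : (0 < l)%N -> w (k + l) = (v l)%:Z.
Proof.
move=> hl; rewrite /oneline addKn.
have -> : (k + l <= k - r)%N = false by apply/negbTE; rewrite -ltnNge; lia.
by have -> : (k + l <= k)%N = false by apply/negbTE; rewrite -ltnNge; lia.
Qed.

Variable n : nat.
Hypotheses (k_lt_n : (k < n)%N) (r_le_k : (r <= k)%N).
Hypothesis w_perm : perm_eq [seq absz (w a) | a <- iota 1 n] (iota 1 n).

Lemma oneline_barred_lt0 a : (k - r < a <= k)%N -> w a < 0.
Proof.
move=> ha; have := @sperm_range n w w_perm a.
by rewrite oneline_barred // abszN oppr_lt0 ltz_nat; lia.
Qed.

Lemma lam1_barred i : (0 < i <= r)%N ->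
  lam1 n k (Inv n w) i = (n.+1 - k + count (fun l => z i < v l) (iota 1 (n - k)))%N.
Proof.
move=> hi; rewrite lam1E; set p := (k.+1 - i)%N.
have wp : w p = - (z i)%:Z by rewrite oneline_barred ?subKn //; lia.
have wp_lt0 : w p < 0 by apply: oneline_barred_lt0; lia.
rewrite (@eq_in_count _ _ predT) ?count_predT ?size_iota; last first.
  move=> l; rewrite mem_iota => hl; rewrite Inv_subE ?wp_lt0 ?oneline_tail; try lia.
  by case: ifP.
rewrite (@eq_in_count _ _ (fun l => z i < v l)%N); last first.
  move=> l; rewrite mem_iota => hl; rewrite Inv_addE ?wp_lt0 ?oneline_tail; try lia.
  by rewrite wp abszN; case: ifP.
by rewrite Inv_sperm_ebas ?wp_lt0 /=; lia.
Qed.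

Lemma lam1_unbarred i : (r < i <= k)%N ->
  lam1 n k (Inv n w) i = count (fun l => v l < y (k.+1 - i))%N (iota 1 (n - k)).
Proof.
move=> hi; rewrite lam1E; set p := (k.+1 - i)%N.
have wp : w p = (y p)%:Z by rewrite oneline_head; lia.
rewrite (@eq_in_count _ _ (fun l => v l < y p)%N); last first.
  move=> l; rewrite mem_iota => hl.
  have : absz (w p) != absz (w (k + l)) by rewrite (sperm_eq _ _ w_perm); try apply/eqP; lia.
  rewrite Inv_subE ?wp ?oneline_tail //=; try lia.
  by case: ltngtP.
rewrite [X in (_ + X + _)%N](@eq_in_count _ _ pred0) ?count_pred0; last first.
  move=> l; rewrite mem_iota => hl; rewrite Inv_addE ?wp ?oneline_tail //=; try lia.
  by case: ifP.
by rewrite Inv_sperm_ebas ?wp //= ?addn0; lia.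
Qed.

Lemma lam2_barred i :
  (forall a b, (1 <= a)%N -> (a < b)%N -> (b <= r)%N -> (z a < z b)%N) ->
  (0 < i <= r)%N ->
  lam2 n k (Inv n w) i =
  (count (fun q => z i < z q) (iota 1 r) + count (fun t => z i < y t) (iota 1 (k - r)))%N.
Proof.
move=> z_incr hi; rewrite lam2E (count_incr_gt _ _ _ z_incr); last lia.
set p := (k.+1 - i)%N.
have wp : w p = - (z i)%:Z by rewrite oneline_barred ?subKn //; lia.
have wp_lt0 : w p < 0 by apply: oneline_barred_lt0; lia.
have -> : iota 1 (k - i) = iota 1 (k - r) ++ iota (1 + (k - r)) (r - i).
  by rewrite -iotaD; congr iota; lia.
rewrite count_cat [RHS]addnC; congr (_ + _)%N.
  apply: eq_in_count => a; rewrite mem_iota => ha /=.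
  have : absz (w a) != absz (w p) by rewrite (sperm_eq _ _ w_perm); try apply/eqP; lia.
  rewrite Inv_addE ?wp_lt0 ?wp ?oneline_head //=; try lia.
  by rewrite abszN; case: ltngtP.
rewrite (@eq_in_count _ _ predT) ?count_predT ?size_iota // => a.
rewrite mem_iota => ha.
by rewrite Inv_addE ?wp_lt0 ?oneline_barred_lt0 ?if_same //; lia.
Qed.

Lemma lam2_unbarred i : (r < i <= k)%N -> lam2 n k (Inv n w) i = 0%N.
Proof.
move=> hi; rewrite lam2E (@eq_in_count _ _ pred0) ?count_pred0 // => a.
rewrite mem_iota => ha; rewrite Inv_addE ?oneline_head //=; try lia.
by case: ifP.
Qed.

End OneLineWord.

Theorem lemma3p6 (n k r : nat) (y z v : nat -> nat) :
  (1 <= k)%N -> (k < n)%N -> (r <= k)%N ->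
  perm_eq [seq absz (oneline k r y z v a) | a <- iota 1 n] (iota 1 n) ->
  (forall a b, (1 <= a)%N -> (a < b)%N -> (b <= k - r)%N -> (y a < y b)%N) ->
  (forall a b, (1 <= a)%N -> (a < b)%N -> (b <= r)%N -> (z a < z b)%N) ->
  (forall a b, (1 <= a)%N -> (a < b)%N -> (b <= n - k)%N -> (v a < v b)%N) ->
  forall i, (1 <= i)%N -> (i <= k)%N ->
    lam1 n k (Inv n (oneline k r y z v)) i =
      (if (i <= r)%N
       then (n.+1 - k + count (fun l => z i < v l) (iota 1 (n - k)))%N
       else count (fun l => v l < y (k.+1 - i)) (iota 1 (n - k)))
    /\
    lam2 n k (Inv n (oneline k r y z v)) i =
      (if (i <= r)%N
       then (count (fun q => z i < z q) (iota 1 r)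
             + count (fun t => z i < y t) (iota 1 (k - r)))%N
       else 0%N).
Proof.
(* only the signed-permutation property and the monotonicity of z are used *)
move=> _ k_lt_n r_le_k w_perm _ z_incr _ i i_gt0 i_le_k.
case: leqP => [i_le_r | r_lt_i].
  by rewrite lam1_barred ?lam2_barred ?i_gt0.
by rewrite lam1_unbarred ?lam2_unbarred ?r_lt_i.
Qed.
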